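(* Let $\gamma\to_d\gamma'$ be a smooth d-step. Then: (i) for every $e\in\mathrm{Edges}$, $e$ is non-smooth in $\gamma$ iff $e$ is non-smooth in $\gamma'$; (ii) for every $e\in\mathrm{Edges}$ non-smooth in $\gamma$, $\mathrm{rank}_\gamma(e)=\mathrm{rank}_{\gamma'}(e)$; (iii) $\mathrm{sum}_d\gamma'>\mathrm{sum}_d\gamma$.
   Context: Let $G$ be a finite, connected, undirected graph with node set $V$ and a distinguished node $r$ (the root); $\mathrm{Edges}=\{(p,q)\in V\times V : p,q\text{ adjacent}\}$ (both orientations). Each node $p$ has a fixed ordered list $N(p)$ of its neighbours. A configuration $\gamma$ assigns to each node $p$ a value $\gamma.p.d\in\mathbb N$ and a neighbour $\gamma.p.par\in N(p)$. For a non-root $p$ let $Dist_p(\gamma)=\min\{\gamma.q.d+1 : q\in N(p)\}$. Algorithm BFS: Root enabled iff $\gamma.r.d\neq 0$, executing sets $r.d:=0$. Non-root $p$, action CD: enabled iff $\gamma.p.d\ne Dist_p(\gamma)$, executing sets $p.d:=Dist_p(\gamma)$. Non-root $p$, action CP: enabled iff $\gamma.p.d=Dist_p(\gamma)$ and $\gamma.q_0.d+1\neq\gamma.p.d$ with $q_0=\gamma.p.par$; executing sets $p.par$ to the first $q\in N(p)$ with $\gamma.q.d+1=\gamma.p.d$. A step $\gamma\to\gamma'$ holds iff a nonempty set $S$ of enabled nodes simultaneously execute their enabled action (evaluated in $\gamma$), others unchanged. A d-step $\gamma\to_d\gamma'$ is a step with $\gamma.r.d=\gamma'.r.d$ and $\gamma.p.d\neq\gamma'.p.d$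 for some $p$. An edge $(p,q)$ is smooth in $\gamma$ if $|\gamma.p.d-\gamma.q.d|\le 1$, non-smooth otherwise. A d-step $\gamma\to_d\gamma'$ is smooth if every node $p$ with $\gamma'.p.d\neq\gamma.p.d$ has all its edges $(p,q)$, $q\in N(p)$, smooth in $\gamma$; otherwise it is non-smooth. $\mathrm{rank}_\gamma(p,q)=\min(\gamma.p.d,\gamma.q.d)$. $\mathrm{sum}_d\gamma=\sum_{q\in V}\gamma.q.d$. *)

From mathcomp Require Import all_boot.
Set Implicit Arguments. Unset Strict Implicit. Unset Printing Implicit Defensive.

Record config (V : finType) := Config { d : V -> nat; par : V -> V }.

Section BFS.
Variables (V : finType) (adj : rel V) (N : V -> seq V) (r : V).

Definition valid_config (g : config V) : Prop := forall p, par g p \in N p.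

(* Dist_p(g) = min { g.q.d + 1 : q in N(p) }  (N(p) nonempty for non-root p
   in a connected graph with >= 2 nodes; the value for empty N(p) is irrelevant). *)
Definition Dist (g : config V) (p : V) : nat :=
  match N p with
  | [::] => 0
  | q :: s => foldr (fun q' m => minn (d g q').+1 m) (d g q).+1 s
  end.

Definition root_enabled (g : config V) : bool := d g r != 0.
Definition CD_enabled (g : config V) (p : V) : bool := (p != r) && (d g p != Dist g p).
Definition CP_enabled (g : config V) (p : V) : bool :=
  [&& p != r, d g p == Dist g p & (d g (par g p)).+1 != d g p].
Definition enabled (g : config V) (p : V) : bool :=
  if p == r then root_enabled g else CD_enabled g p || CP_enabled g p.

Definition first_par (g : config V) (p : V) : V :=
  nth p (N p) (find (fun q => (d g q).+1 == d g p) (N p)).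

Definition executes (g g' : config V) (p : V) : Prop :=
  if p == r then d g' p = 0 /\ par g' p = par g p
  else if CD_enabled g p then d g' p = Dist g p /\ par g' p = par g p
  else d g' p = d g p /\ par g' p = first_par g p.

Definition step (g g' : config V) : Prop :=
  exists S : {set V},
    [/\ S != set0,
        (forall p, p \in S -> enabled g p /\ executes g g' p)
      & (forall p, p \notin S -> d g' p = d g p /\ par g' p = par g p)].

Definition dstep (g g' : config V) : Prop :=
  [/\ step g g', d g r = d g' r & exists p, d g p <> d g' p].

Definition smooth_edge (g : config V) (p q : V) : bool :=
  (d g p <= (d g q).+1) && (d g q <= (d g p).+1).

Definition smooth_dstep (g g' : config V) : Prop :=
  dstep g g' /\
  (forall p, d g' p <> d g p -> forall q, q \in N p -> smooth_edge g p q).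

Definition rank (g : config V) (p q : V) : nat := minn (d g p) (d g q).

Definition sum_d (g : config V) : nat := \sum_(q : V) d g q.

End BFS.

(* Along a d-step the only nodes whose distance changes are non-root nodes
   executing CD, which set p.d := Dist_p.  If all edges at p are smooth, the
   neighbour realising Dist_p gives p.d <= Dist_p, so p.d strictly increases
   (hence sum_d increases) and Dist_p lies between p.d + 1 and q.d + 1 for every
   neighbour q.  These bounds keep every edge at a changed node smooth, also when
   both endpoints change (then both new values coincide), so an edge that is
   non-smooth before or after the step joins two unchanged nodes: smoothness
   and rank of such an edge are untouched. *)
From mathcomp Require Import all_boot.
From mathcomp Require Import zify.

Set Implicit Arguments.
Unset Strict Implicit.

Lemma ltn_sum (I : finType) (E1 E2 : I -> nat) (i0 : I) :
  (forall i, E1 i <= E2 i) -> E1 i0 < E2 i0 ->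
  \sum_i E1 i < \sum_i E2 i.
Proof.
move=> le12 lt0; rewrite (bigD1 i0) //= [X in _ < X](bigD1 i0) //=.
by rewrite -addSn leq_add // leq_sum.
Qed.

Lemma connect_neq_exists_edge (T : finType) (e : rel T) x y :
  connect e x y -> x != y -> exists z, e x z.
Proof.
move/connectP=> [[|z s] /= xs ->]; first by rewrite eqxx.
by case/andP: xs => exz _ _; exists z.
Qed.

Lemma smooth_edgeC (V : finType) (g : config V) p q :
  smooth_edge g p q = smooth_edge g q p.
Proof. by rewrite /smooth_edge andbC. Qed.

Section Dist.
Variables (V : finType) (N : V -> seq V) (g : config V).

Lemma foldr_minS_spec (q : V) (s : seq V) :
  let m := foldr (fun q' m => minn (d g q').+1 m) (d g q).+1 s in
  (forall x, x \in q :: s -> m <= (d g x).+1) /\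
  exists2 x, x \in q :: s & m = (d g x).+1.
Proof.
elim: s => [|a s [IHle [y ys IHeq]]] /=.
  by split; [move=> x; rewrite inE => /eqP -> | exists q; rewrite ?inE].
set m := foldr _ _ s in IHle IHeq *; split.
  move=> x; rewrite !inE => /orP [/eqP ->|/orP [/eqP ->|xs]].
  - by have := IHle q (mem_head _ _); lia.
  - lia.
  - by have := IHle x; rewrite inE xs orbT => /(_ isT); lia.
case: (leqP (d g a).+1 m) => am.
  by exists a; rewrite ?inE ?eqxx ?orbT //; lia.
by exists y; [move: ys; rewrite !inE => /orP [] ->; rewrite ?orbT | lia].
Qed.

Lemma Dist_le p q : q \in N p -> Dist N g p <= (d g q).+1.
Proof.
rewrite /Dist; case: (N p) => [|a s] // qs.
by have [le _] := foldr_minS_spec a s; apply: le.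
Qed.

Lemma Dist_attained p : N p != [::] ->
  exists2 q, q \in N p & Dist N g p = (d g q).+1.
Proof.
by rewrite /Dist; case: (N p) => [|a s] // _; have [_ ex] := foldr_minS_spec a s.
Qed.

End Dist.

Section SmoothDstep.
Variables (V : finType) (adj : rel V) (N : V -> seq V) (r : V).
Hypothesis adj_sym : symmetric adj.
Hypothesis adj_conn : forall p q : V, connect adj p q.
Hypothesis N_adj : forall p q, (q \in N p) = adj p q.
Variables g g' : config V.
Hypothesis smooth : smooth_dstep N r g g'.

Lemma N_nonnil p : p != r -> N p != [::].
Proof.
move=> pr; have [z pz] := connect_neq_exists_edge (adj_conn p r) pr.
by move: pz; rewrite -N_adj; case: (N p).
Qed.

(* The root keeps its value in a d-step, so a changed node executed CD. *)
Lemma dstep_changed p : d g' p <> d g p ->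
  [/\ p != r, CD_enabled N r g p & d g' p = Dist N g p].
Proof.
have [[[S [_ execS fixS] dr _] _]] := smooth.
move=> changed; have pr : p != r by apply/eqP => pr; apply: changed; rewrite pr dr.
have pS : p \in S by apply/negPn/negP => /fixS [].
have [_] := execS p pS; rewrite /executes (negbTE pr).
by case: ifP => [CDp [] | _ [] //].
Qed.

Lemma smooth_dstep_changed p : d g' p <> d g p ->
  d g p < d g' p /\ d g' p = Dist N g p.
Proof.
move=> changed; have [pr CDp ->] := dstep_changed changed; split=> //.
have [x xN Dx] := Dist_attained g (N_nonnil pr).
have /andP [px _] := smooth.2 p changed x xN.
by move: CDp; rewrite /CD_enabled pr Dx /= => /eqP; lia.
Qed.

Lemma smooth_dstep_le p : d g p <= d g' p.
Proof.
have [-> // | /eqP changed] := eqVneq (d g' p) (d g p).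
by have [/ltnW] := smooth_dstep_changed changed.
Qed.

(* If both endpoints change, each new value is squeezed between the other's. *)
Lemma smooth_dstep_changed_edge p q : adj p q -> d g' p <> d g p ->
  smooth_edge g p q /\ smooth_edge g' p q.
Proof.
move=> pq changed; have qN : q \in N p by rewrite N_adj.
have smooth_pq := smooth.2 p changed q qN; split=> //.
have [ltp Ep] := smooth_dstep_changed changed.
have Dp := Dist_le g qN.
move: smooth_pq; rewrite /smooth_edge => /andP [_ qp].
have [Eq | /eqP changed_q] := eqVneq (d g' q) (d g q).
  by apply/andP; split; lia.
have [ltq Eq] := smooth_dstep_changed changed_q.
have Dq : Dist N g q <= (d g p).+1 by apply: Dist_le; rewrite N_adj adj_sym.
by apply/andP; split; lia.
Qed.

Lemma smooth_dstep_smooth_edge p q : adj p q ->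
  smooth_edge g' p q = smooth_edge g p q.
Proof.
move=> pq; have qp : adj q p by rewrite adj_sym.
have [Ep | /eqP changed_p] := eqVneq (d g' p) (d g p); last first.
  by have [-> ->] := smooth_dstep_changed_edge pq changed_p.
have [Eq | /eqP changed_q] := eqVneq (d g' q) (d g q); last first.
  have [sg sg'] := smooth_dstep_changed_edge qp changed_q.
  by rewrite !(smooth_edgeC _ p) sg sg'.
by rewrite /smooth_edge Ep Eq.
Qed.

Lemma smooth_dstep_non_smooth_rank p q : adj p q -> ~~ smooth_edge g p q ->
  rank g' p q = rank g p q.
Proof.
move=> pq non_smooth; have qp : adj q p by rewrite adj_sym.
have fixed x y : adj x y -> ~~ smooth_edge g x y -> d g' x = d g x.
  move=> xy; apply: contraNeq => /eqP changed.
  by have [] := smooth_dstep_changed_edge xy changed.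
by rewrite /rank (fixed p q pq) // (fixed q p qp) // smooth_edgeC.
Qed.

End SmoothDstep.

Theorem lemma5 (V : finType) (adj : rel V) (N : V -> seq V) (r : V)
    (adj_sym : symmetric adj) (adj_irr : irreflexive adj)
    (adj_conn : forall p q : V, connect adj p q)
    (N_uniq : forall p, uniq (N p))
    (N_adj : forall p q, (q \in N p) = adj p q)
    (g g' : config V) (g_valid : valid_config N g) :
  smooth_dstep N r g g' ->
  [/\ (forall p q, adj p q -> ~~ smooth_edge g p q = ~~ smooth_edge g' p q),
      (forall p q, adj p q -> ~~ smooth_edge g p q -> rank g p q = rank g' p q)
    & sum_d g' > sum_d g].
Proof.
move=> smooth; split.
- by move=> p q pq; rewrite (smooth_dstep_smooth_edge adj_sym adj_conn N_adj smooth).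
- by move=> p q pq ns; rewrite (smooth_dstep_non_smooth_rank adj_sym adj_conn N_adj smooth).
- have [[_ _ [p0 /nesym changed]] _] := smooth.
  rewrite /sum_d; apply: (ltn_sum (i0 := p0)) => [p|].
    exact: (smooth_dstep_le adj_conn N_adj smooth).
  by have [] := smooth_dstep_changed adj_conn N_adj smooth changed.
Qed.
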